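(* Let $n\in\mathbb N$, $\delta>0$, and let $d$ be a metric on $\mathbb R^n$ induced by a norm. Let $\{\mathcal D^n(\delta);\tilde w_1,\dots,\tilde w_N;p_1,\dots,p_N\}$ be a DIFS in which each $\tilde w_i$ is the $\delta$-roundoff of a contraction $w_i:\mathbb R^n\to\mathbb R^n$ on $(\mathbb R^n,d)$ with contractivity factor $\lambda_i\in[0,1)$ and fixed point $x_f^{(i)}$. Let $o\in\mathbb R^n$ be arbitrary, and put $r_{max}:=\max_i d(x_f^{(i)},o)$, $\lambda_{max}:=\max_i\lambda_i$, $\alpha:=\frac{1+\lambda_{max}}{1-\lambda_{max}}$ and $r:=\alpha r_{max}+\theta(1-\lambda_{max})^{-1}$. Then for every $\varepsilon>0$, the set $S=B(o,r+\varepsilon)\cap\mathcal D^n(\delta)$, where $B(o,\rho)$ is the open ball in $(\mathbb R^n,d)$ of center $o$ and radius $\rho$, satisfies $\tilde w_i(S)\subset S$ for every $i\in\{1,\dots,N\}$. Moreover, the set $\mathcal A$ of all recurrent states of the Markov chain associated with the DIFS is nonempty and $\mathcal A\subset S$.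
   Context: For $m=(m_1,\dots,m_n)\in\mathbb Z^n$ the $\delta$-cube is $C_\delta(m)=\prod_{j=1}^n[(m_j-\tfrac12)\delta,(m_j+\tfrac12)\delta)$; these cubes partition $\mathbb R^n$. The $\delta$-discretization is $\mathcal D^n(\delta)=\{\delta m:m\in\mathbb Z^n\}\subset\mathbb R^n$. The $\delta$-roundoff of $x\in\mathbb R^n$ is $\tilde x=\delta m$ where $x\in C_\delta(m)$; the $\delta$-roundoff of a map $w:\mathbb R^n\to\mathbb R^n$ is $\tilde w:\mathcal D^n(\delta)\to\mathcal D^n(\delta)$, $\tilde w(\tilde x)=\widetilde{w(\tilde x)}$. $\theta:=\tfrac12\operatorname{diam}_d(C_\delta(0))$. A DIFS (discrete IFS with place-dependent probabilities) $\{S;\tilde w_1,\dots,\tilde w_N;p_1,\dots,p_N\}$ consists of $S\subset\mathcal D^n(\delta)$, maps $\tilde w_i:S\to S$ and functions $p_i:S\to(0,1]$ with $\sum_i p_i(\tilde x)=1$ for all $\tilde x\in S$. Its associated Markov chain on $S$ has transition probabilities $P(\tilde x,\tilde y)=\sum_{i=1}^N p_i(\tilde x)\mathbf 1_{\{\tilde y\}}(\tilde w_i(\tilde x))$. A state $\tilde x$ is recurrent if the chain started at $\tilde x$ returns to $\tilde x$ in finitely many steps with probability $1$. *)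

From HB Require Import structures.
From mathcomp Require Import all_boot all_order all_algebra.
From mathcomp Require Import all_classical all_reals all_analysis.
Set Implicit Arguments. Unset Strict Implicit. Unset Printing Implicit Defensive.
Import Order.TTheory GRing.Theory Num.Theory numFieldNormedType.Exports.
Local Open Scope ring_scope.
Local Open Scope classical_set_scope.

Section DIFS.
Variables (R : realType) (n : nat).

(* nrm is a norm on R^n; the induced metric is d(x,y) = nrm (x - y). *)
Definition is_norm (nrm : 'rV[R]_n -> R) : Prop :=
  [/\ forall x, nrm x = 0 -> x = 0,
      forall (a : R) x, nrm (a *: x) = `|a| * nrm x
    & forall x y, nrm (x + y) <= nrm x + nrm y].

Definition ivec (m : 'rV[int]_n) : 'rV[R]_n := map_mx (fun z : int => z%:~R) m.

Definition cube (delta : R) (m : 'rV[int]_n) : set 'rV[R]_n :=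
  [set x | forall j, ((m 0 j)%:~R - 2^-1) * delta <= x 0 j
                     /\ x 0 j < ((m 0 j)%:~R + 2^-1) * delta].

Definition discretization (delta : R) : set 'rV[R]_n :=
  [set x | exists m : 'rV[int]_n, x = delta *: ivec m].

(* delta-roundoff of a point: delta*m where x lies in C_delta(m), i.e.
   m_j = floor (x_j / delta + 1/2) *)
Definition roundoff (delta : R) (x : 'rV[R]_n) : 'rV[R]_n :=
  delta *: ivec (\row_j Num.floor (x 0 j / delta + 2^-1)).

Definition roundoff_map (delta : R) (w : 'rV[R]_n -> 'rV[R]_n) :=
  fun x => roundoff delta (w x).

Definition theta (nrm : 'rV[R]_n -> R) (delta : R) : R :=
  2^-1 * sup [set t : R | exists x y : 'rV[R]_n,
     [/\ cube delta 0 x, cube delta 0 y & t = nrm (x - y)]].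

Definition trans (N : nat) (wt : 'I_N -> 'rV[R]_n -> 'rV[R]_n)
  (p : 'I_N -> 'rV[R]_n -> R) (x y : 'rV[R]_n) : R :=
  \sum_(i < N) p i x * (wt i x == y)%:R.

Definition succs (N : nat) (wt : 'I_N -> 'rV[R]_n -> 'rV[R]_n) (y : 'rV[R]_n)
  : seq 'rV[R]_n := undup [seq wt i y | i <- enum 'I_N].

(* hitprob k y = probability that the chain started at y visits x at some
   time in {1,..,k}.  (Sums over z range over the support of trans y _.) *)
Fixpoint hitprob (N : nat) (wt : 'I_N -> 'rV[R]_n -> 'rV[R]_n)
  (p : 'I_N -> 'rV[R]_n -> R) (x : 'rV[R]_n) (k : nat) (y : 'rV[R]_n) : R :=
  match k with
  | 0 => 0
  | k'.+1 => trans wt p y x +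
       \sum_(z <- succs wt y | z != x) trans wt p y z * hitprob wt p x k' z
  end.

Definition recurrent (N : nat) (wt : 'I_N -> 'rV[R]_n -> 'rV[R]_n)
  (p : 'I_N -> 'rV[R]_n -> R) (x : 'rV[R]_n) : Prop :=
  hitprob wt p x k x @[k --> \oo] --> (1 : R).

End DIFS.

From HB Require Import structures.
From mathcomp Require Import all_boot all_order all_algebra.
From mathcomp Require Import all_classical all_reals all_analysis.
From mathcomp Require Import ring lra zify.
Import Order.TTheory GRing.Theory Num.Theory numFieldNormedType.Exports.
Set Implicit Arguments. Unset Strict Implicit. Unset Printing Implicit Defensive.
Local Open Scope ring_scope.
Local Open Scope classical_set_scope.

(* Write d(y) = nrm (o - y).  The triangle inequality through w_i y and the
   fixed point xf_i bounds one rounded step by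
   d(wt_i y) <= rmax + lam_i (rmax + d(y)) + theta <= (1 - lam_i) r + lam_i d(y).
   Hence every ball B(o, rho) with rho > r is invariant, and from a state x with
   d(x) > r the chain enters the ball B(o, d(x)), which it never leaves and which
   does not contain x: recurrent states lie within distance r of o.
   For existence, B(o, r + 1) meets the lattice in a finite invariant set, since
   all norms on R^n are equivalent.  Following irreversible transitions inside it
   ends at a state x that can be reached back from every state it leads to.  On
   this finite closed class the chain hits x within K steps with probability at
   least some q > 0, so it misses x during jK steps with probability at most
   (1 - q)^j. *)

Section Reachability.
Variables (T : Type) (N : nat) (f : 'I_N -> T -> T).

Inductive reachable : T -> T -> Prop :=
| reachable_refl y : reachable y y
| reachable_step i y z : reachable (f i y) z -> reachable y z.

Lemma reachable_trans y z u : reachable y z -> reachable z u -> reachable y u.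
Proof. by elim=> // i {}y {}z _ IH /IH; apply: reachable_step. Qed.

Lemma reachable_succ i y : reachable y (f i y).
Proof. by apply: (@reachable_step i); apply: reachable_refl. Qed.

Lemma reachable_closed (P : T -> Prop) y z :
  (forall i y, P y -> P (f i y)) -> reachable y z -> P y -> P z.
Proof. by move=> fP; elim=> // i {}y {}z _ IH /(fP i); apply: IH. Qed.

End Reachability.

Lemma ltn_sub_count (T : eqType) (a b : pred T) (s : seq T) :
  subpred a b -> (exists2 u, u \in s & b u && ~~ a u) -> (count a s < count b s)%N.
Proof.
move=> sab; elim: s => [[u]//|v s IH] [u]; rewrite inE => /orP[/eqP ->|us] bu /=.
  case/andP: bu => -> /negbTE ->; rewrite add0n add1n ltnS; exact: sub_count.
rewrite -addnS; apply: leq_add; last by apply: IH; exists u.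
by case: (boolP (a v)) => // /sab ->.
Qed.

Lemma reachable_closed_class (T : eqType) (N : nat) (f : 'I_N -> T -> T)
    (P : T -> Prop) (s : seq T) :
  (forall i y, P y -> P (f i y)) -> (forall y, P y -> y \in s) ->
  forall y, P y -> exists2 x, reachable f y x &
    forall u, reachable f x u -> reachable f u x.
Proof.
move=> fP Ps.
pose c y := count (fun u => `[< reachable f y u >]) s.
suff: forall k y, c y = k -> P y -> exists2 x, reachable f y x &
    forall u, reachable f x u -> reachable f u x by move=> + y; apply.
elim/ltn_ind=> k IH y ck Py.
have [back|/existsNP[u /not_implyP[yu uy]]] :=
  pselect (forall u, reachable f y u -> reachable f u y).
  by exists y => //; apply: reachable_refl.
rewrite -{}ck in IH.
have cu : (c u < c y)%N.
  apply: ltn_sub_count => [v /asboolP uv|]; first exact/asboolP/(reachable_trans yu).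
  exists y; first exact: Ps.
  by apply/andP; split; [exact/asboolP/reachable_refl | apply/asboolP].
have [x ux xclass] := IH _ cu u erefl (reachable_closed fP yu Py).
by exists x => //; apply: reachable_trans yu ux.
Qed.

Lemma uniform_lower_bound (T : eqType) (R : realDomainType) (g : nat -> T -> R)
    (Q : T -> Prop) (s : seq T) :
  (forall u, Q u -> nondecreasing_seq (g ^~ u)) ->
  (forall u, Q u -> exists m, 0 < g m u) ->
  exists K q, 0 < q /\ forall u, u \in s -> Q u -> q <= g K u.
Proof.
move=> g_nd g_pos; elim: s => [|a s [K [q [q0 qK]]]]; first by exists 0%N, 1.
have [Qa|nQa] := pselect (Q a); last first.
  by exists K, q; split=> // u; rewrite inE => /orP[/eqP -> //|]; apply: qK.
have [m ma] := g_pos a Qa.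
exists (maxn K m), (Order.min q (g m a)); split; first by rewrite lt_min q0.
move=> u; rewrite inE ge_min => /orP[/eqP -> _|us Qu].
  by apply/orP; right; apply: g_nd; rewrite ?leq_maxr.
by apply/orP; left; apply: le_trans (qK u us Qu) _; apply: g_nd; rewrite ?leq_maxl.
Qed.

Lemma cvg_to1_of_geometric (R : realType) (u : R^nat) (K : nat) (q : R) :
  nondecreasing_seq u -> (forall k, u k <= 1) -> 0 < q <= 1 ->
  (forall j, 1 - u (j * K)%N <= (1 - q) ^+ j) -> u k @[k --> \oo] --> (1 : R).
Proof.
move=> u_nd u_le1 /andP[q0 q1] miss.
have : (1 - q) ^+ j @[j --> \oo] --> (0 : R).
  by apply: cvg_expr; rewrite ger0_norm ?subr_ge0 // ltrBlDr ltrDl.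
move/cvgrPdist_lt => geo; apply/cvgrPdist_lt => e e0.
have [J _ /(_ J (leqnn J))] := geo e e0.
rewrite sub0r normrN ger0_norm ?exprn_ge0 ?subr_ge0 // => qJ.
exists (J * K)%N => // k /= JKk; rewrite ger0_norm ?subr_ge0 //.
by apply: le_lt_trans qJ; apply: le_trans (miss J); rewrite lerD2l lerN2 u_nd.
Qed.

Section HittingProbability.
Variables (R : realType) (n N : nat) (wt : 'I_N -> 'rV[R]_n -> 'rV[R]_n).
Variables (p : 'I_N -> 'rV[R]_n -> R) (x : 'rV[R]_n).
Local Notation hit := (hitprob wt p x).

Lemma hitprobS k y :
  hit k.+1 y = \sum_(i < N) p i y * (if wt i y == x then 1 else hit k (wt i y)).
Proof.
rewrite /= /trans.
have succ_term i : \sum_(z <- succs wt y | z != x) p i y * (wt i y == z)%:R * hit k z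
    = p i y * ((wt i y != x)%:R * hit k (wt i y)).
  have wt_succ : wt i y \in succs wt y.
    by rewrite mem_undup; apply/mapP; exists i; rewrite ?mem_enum.
  rewrite big_mkcond (bigD1_seq (wt i y)) ?undup_uniq //= eqxx mulr1 big1 ?addr0.
    by case: (wt i y != x); rewrite ?mul0r ?mul1r ?mulr0.
  by move=> z /negbTE zi; rewrite (eq_sym (wt i y)) zi mulr0 mul0r; case: ifP.
under eq_bigr => z _ do rewrite big_distrl /=.
rewrite exchange_big -big_split; apply: eq_bigr => i _ /=.
by rewrite succ_term -mulrDr; case: eqP; rewrite ?mul0r ?addr0 ?mul1r ?add0r.
Qed.

Lemma not_recurrent (Z : set 'rV[R]_n) :
  (forall i y, Z y -> Z (wt i y)) -> ~ Z x -> (forall i, Z (wt i x)) ->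
  ~ recurrent wt p x.
Proof.
move=> wtZ Zx Zwtx.
have hit0 k y : Z y -> hit k y = 0.
  elim: k y => // k IH y Zy; rewrite hitprobS big1 // => i _.
  have Zi := wtZ i y Zy; case: eqP => [wtx|_]; first by rewrite wtx in Zi.
  by rewrite IH ?mulr0.
have hitx0 k : hit k.+1 x = 0.
  rewrite hitprobS big1 // => i _; case: eqP => [wtx|_].
    by have := Zwtx i; rewrite wtx.
  by rewrite hit0 ?mulr0.
move/cvgrPdist_lt/(_ 1 ltr01) => -[K _ /(_ K.+1 (leqnSn K))].
by rewrite hitx0 subr0 normr1 ltxx.
Qed.

Variable D : set 'rV[R]_n.
Hypothesis wtD : forall i y, D y -> D (wt i y).
Hypothesis p_gt0 : forall i y, D y -> 0 < p i y.
Hypothesis p_sum1 : forall y, D y -> \sum_(i < N) p i y = 1.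

Let p_ge0 i y : D y -> 0 <= p i y.
Proof. by move/(p_gt0 i)/ltW. Qed.

Lemma hitprob_ge0_le1 k y : D y -> 0 <= hit k y <= 1.
Proof.
elim: k y => [|k IH] y Dy; first by rewrite lexx ler01.
rewrite hitprobS; apply/andP; split.
  apply: sumr_ge0 => i _; rewrite mulr_ge0 ?p_ge0 //.
  by case: ifP => _; [exact: ler01 | case/andP: (IH _ (wtD i Dy))].
rewrite -[leRHS](p_sum1 Dy) ler_sum // => i _; apply: ler_piMr; first exact: p_ge0 Dy.
by case: ifP => _ //; case/andP: (IH _ (wtD i Dy)).
Qed.

Lemma hitprob_nondecreasing y : D y -> nondecreasing_seq (hit ^~ y).
Proof.
move=> Dy; apply/nondecreasing_seqP => k; elim: k y Dy => [|k IH] y Dy.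
  by case/andP: (hitprob_ge0_le1 1 Dy).
rewrite [leRHS]hitprobS hitprobS ler_sum // => i _; rewrite ler_wpM2l ?p_ge0 //.
by case: ifP => // _; apply/IH/wtD.
Qed.

Lemma hitprob_ge_term k i y : D y ->
  p i y * (if wt i y == x then 1 else hit k (wt i y)) <= hit k.+1 y.
Proof.
move=> Dy; rewrite hitprobS (bigD1 i) //= lerDl sumr_ge0 // => j _.
rewrite mulr_ge0 ?p_ge0 //; case: ifP => _ //.
by case/andP: (hitprob_ge0_le1 k (wtD j Dy)).
Qed.

Lemma hitprob_gt0 i y : D y -> reachable wt (wt i y) x -> exists m, 0 < hit m.+1 y.
Proof.
move=> Dy; move yu: (wt i y) => u ux.
have {ux} [z ux zx] : exists2 z, reachable wt u z & z = x by exists x.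
elim: ux zx i y Dy yu => {u z} [u|j u z _ IH] zx i y Dy yu.
  exists 0%N; apply: lt_le_trans (hitprob_ge_term 0 i Dy).
  by rewrite yu zx eqxx mulr1 p_gt0.
have Du : D u by rewrite -yu; apply: wtD.
have [m hm] := IH zx j u Du erefl.
exists m.+1; apply: lt_le_trans (hitprob_ge_term m.+1 i Dy).
by rewrite yu; case: ifP => _; rewrite ?mulr1 ?mulr_gt0 ?p_gt0.
Qed.

Lemma missS k y : D y -> 1 - hit k.+1 y =
  \sum_(i < N) p i y * (if wt i y == x then 0 else 1 - hit k (wt i y)).
Proof.
move=> Dy; rewrite hitprobS -{1}(p_sum1 Dy) -sumrB; apply: eq_bigr => i _.
by case: ifP => _; rewrite ?mulr1 ?mulr0 ?subrr // mulrBr mulr1.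
Qed.

Section MissOnInvariantSet.
Variable Q : set 'rV[R]_n.
Hypotheses (QD : Q `<=` D) (wtQ : forall i y, Q y -> Q (wt i y)).

Lemma miss_addn K m t y : (forall z, Q z -> 1 - hit K z <= m) ->
  Q y -> 1 - hit (t + K) y <= m * (1 - hit t y).
Proof.
move=> missK; elim: t y => [|t IH] y Qy; first by rewrite add0n subr0 mulr1 missK.
have Dy := QD Qy.
rewrite addSn !missS // mulr_sumr ler_sum // => i _.
rewrite mulrCA ler_wpM2l ?p_ge0 //.
by case: ifP => _; [rewrite mulr0 | apply/IH/wtQ].
Qed.

Lemma miss_muln K q j y : q <= 1 -> (forall z, Q z -> q <= hit K z) ->
  Q y -> 1 - hit (j * K) y <= (1 - q) ^+ j.
Proof.
move=> q1 hitK; elim: j y => [|j IH] y Qy; first by rewrite mul0n subr0 expr0.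
rewrite mulSnr exprSr mulrC.
apply: le_trans (miss_addn (m := 1 - q) (j * K) _ Qy) _ => [z Qz|].
  by rewrite lerD2l lerN2 hitK.
by rewrite ler_wpM2l ?subr_ge0 ?IH.
Qed.

End MissOnInvariantSet.

Lemma recurrent_of_closed_class (s : seq 'rV[R]_n) : D x ->
  (forall u, reachable wt x u -> u \in s) ->
  (forall u, reachable wt x u -> reachable wt u x) -> recurrent wt p x.
Proof.
move=> Dx xs back.
have [i0 _] : exists i : 'I_N, true.
  case: (pickP (fun _ : 'I_N => true)) => [i _|none]; first by exists i.
  by move: (p_sum1 Dx); rewrite big_pred0 // => /eqP; rewrite eq_sym oner_eq0.
pose Q := reachable wt x.
have QD : Q `<=` D by move=> u xu; apply: reachable_closed xu Dx.
have wtQ i u : Q u -> Q (wt i u) by move=> xu; apply: reachable_trans xu (reachable_succ wt i u).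
have hit_pos u : Q u -> exists m, 0 < hit m u.
  move=> xu; have [m hm] := hitprob_gt0 (QD _ xu) (back _ (wtQ i0 u xu)).
  by exists m.+1.
have [K [q [q0 qK]]] := uniform_lower_bound s
  (fun u Qu => hitprob_nondecreasing (QD _ Qu)) hit_pos.
have Qx : Q x by apply: reachable_refl.
have q1 : q <= 1.
  by apply: le_trans (qK x (xs _ Qx) Qx) _; case/andP: (hitprob_ge0_le1 K Dx).
apply: (cvg_to1_of_geometric (K := K) (q := q)).
- exact: hitprob_nondecreasing.
- by move=> k; case/andP: (hitprob_ge0_le1 k Dx).
- by rewrite q0.
- move=> j; apply: (miss_muln QD wtQ j q1) Qx => z Qz.
  exact: qK (xs _ Qz) Qz.
Qed.
End HittingProbability.

Lemma coord_le_mx_norm (K : realDomainType) m n (x : 'M[K]_(m, n)) i j :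
  `|x i j| <= `|x|.
Proof.
by rewrite [leRHS]/Num.Def.normr /= mx_normrE; apply/bigmax_geP; right; exists (i, j).
Qed.

Section Norm.
Variables (R : realType) (n : nat) (nrm : 'rV[R]_n -> R).
Hypothesis nrmP : is_norm nrm.

Lemma nrmZ a x : nrm (a *: x) = `|a| * nrm x.
Proof. by case: nrmP. Qed.

Lemma nrm0 : nrm 0 = 0.
Proof. by rewrite -(scale0r 0) nrmZ normr0 mul0r. Qed.

Lemma nrmN x : nrm (- x) = nrm x.
Proof. by rewrite -scaleN1r nrmZ normrN normr1 mul1r. Qed.

Lemma nrm_distD x y z : nrm (x - z) <= nrm (x - y) + nrm (y - z).
Proof. by case: nrmP => _ _ /(_ (x - y) (y - z)); rewrite addrA subrK. Qed.

Lemma nrm_ge0 x : 0 <= nrm x.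
Proof. by case: nrmP => _ _ /(_ x (- x)); rewrite subrr nrm0 nrmN; lra. Qed.

Lemma nrm_distC x y : nrm (x - y) = nrm (y - x).
Proof. by rewrite -nrmN opprB. Qed.

Lemma nrm_le_sum_coord x : nrm x <= \sum_(j < n) `|x 0 j| * nrm 'e_j.
Proof.
rewrite {1}(row_sum_delta x); elim/big_rec2: _ => [|j y1 y2 _ IH]; first by rewrite nrm0.
case: nrmP => _ _ /(_ (x 0 j *: 'e_j) y2) /le_trans; apply.
by rewrite nrmZ lerD2l.
Qed.

Lemma nrm_le_mx_norm x : nrm x <= (\sum_(j < n) nrm 'e_j) * `|x|.
Proof.
rewrite mulr_suml; apply: le_trans (nrm_le_sum_coord x) _; apply: ler_sum => j _.
by rewrite mulrC ler_wpM2l ?nrm_ge0 ?coord_le_mx_norm.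
Qed.

Lemma nrm_continuous : continuous nrm.
Proof.
move=> x; set C := \sum_(j < n) nrm 'e_j.
have C0 : 0 <= C by apply: sumr_ge0 => j _; apply: nrm_ge0.
apply/(@cvgrPdist_lt _ _ _ _ (nbhs_filter x)) => e e0.
have eC : 0 < e / (C + 1) by rewrite divr_gt0 // ltr_wpDl.
apply: filterS (nbhsx_ballx x _ eC) => y; rewrite -ball_normE /= => xy.
have : `|nrm x - nrm y| <= nrm (x - y).
  have := nrm_distD x y 0; have := nrm_distD y x 0.
  by rewrite !subr0 ler_norml (nrm_distC y x); lra.
move/le_lt_trans; apply; apply: le_lt_trans (nrm_le_mx_norm _) _.
have : C * `|x - y| <= C * (e / (C + 1)) by rewrite ler_wpM2l // ltW.
move/le_lt_trans; apply; rewrite mulrA ltr_pdivrMr ?ltr_wpDl //; nra.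
Qed.

(* c is the minimum of nrm on the compact unit sphere of the max-norm. *)
Lemma mx_norm_le_nrm : exists2 c, 0 < c & forall x, c * `|x| <= nrm x.
Proof.
have [[v v0]|zero] := pselect (exists v : 'rV[R]_n, v != 0); last first.
  exists 1 => // x; have -> : x = 0 by apply/eqP; apply: contra_notT zero => x0; exists x.
  by rewrite normr0 mulr0 nrm0.
pose A := [set x : 'rV[R]_n | `|x| = 1].
have unitA x : x != 0 -> A (`|x|^-1 *: x).
  by move=> x0; rewrite /A /= normrZ normfV normr_id mulVf ?normr_eq0.
have A_compact : compact A.
  apply: bounded_closed_compact.
    by exists 1; split=> [|M M1 x]; [exact: num_real | rewrite /A /= => ->; apply: ltW].
  have -> : A = (fun x : 'rV[R]_n => `|x|) @^-1` [set x : R | x = 1] by [].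
  by apply: (continuous_closedP _).1; [exact: norm_continuous | exact: closed_eq].
have [c cA cmin] := EVT_min_rV (ex_intro _ _ (unitA v v0)) A_compact
  (continuous_subspaceT nrm_continuous).
have c1 : `|c| = 1 by move: cA; rewrite inE.
have c_gt0 : 0 < nrm c.
  rewrite lt_def nrm_ge0 andbT; apply/eqP => /(let: And3 H _ _ := nrmP in H) c0.
  by move: c1; rewrite c0 normr0 => /eqP; rewrite eq_sym oner_eq0.
exists (nrm c) => // x; have [->|x0] := eqVneq x 0; first by rewrite normr0 mulr0 nrm0.
have := cmin _ (mem_set (unitA x x0)); rewrite nrmZ normfV normr_id.
by rewrite ler_pdivlMl ?normr_gt0 // mulrC.
Qed.

End Norm.

Lemma int_box_finite n (M : nat) : exists s : seq 'rV[int]_n,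
  forall m : 'rV[int]_n, (forall j, `|m 0 j| <= M%:Z) -> m \in s.
Proof.
exists [seq \row_j ((nat_of_ord (v 0 j))%:Z - M%:Z) | v : 'rV['I_M.*2.+1]_n <- enum 'rV['I_M.*2.+1]_n].
move=> m mM; apply/mapP; exists (\row_j inord `|m 0 j + M%:Z|); first by rewrite mem_enum.
apply/rowP => j; have := mM j; rewrite !mxE; move: (m 0 j : int) => a.
by rewrite -abszE lez_nat => aM; rewrite inordK; lia.
Qed.

Section Discretization.
Variables (R : realType) (n : nat) (nrm : 'rV[R]_n -> R) (delta : R).
Hypotheses (nrmP : is_norm nrm) (delta_gt0 : 0 < delta).

Lemma cube0P (x : 'rV[R]_n) : cube delta 0 x <-> forall j, - (2^-1 * delta) <= x 0 j < 2^-1 * delta.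
Proof.
rewrite /cube; split=> xj j; have := xj j; rewrite mxE sub0r add0r mulNr.
  by case=> -> ->.
by case/andP=> -> ->.
Qed.

Let cube_dist := [set t : R | exists x y : 'rV[R]_n,
  [/\ cube delta 0 x, cube delta 0 y & t = nrm (x - y)]].

Let cube_dist0 : cube_dist 0.
Proof.
have h : 0 < 2^-1 * delta by rewrite mulr_gt0 ?invr_gt0.
by exists 0, 0; split; rewrite ?subr0 ?(nrm0 nrmP) //; apply/cube0P => j;
  rewrite mxE h oppr_le0 ltW.
Qed.

Lemma has_sup_cube_dist : has_sup cube_dist.
Proof.
split; first by exists 0.
exists (\sum_(j < n) delta * nrm 'e_j) => _ [x [y [/cube0P x0 /cube0P y0 ->]]].
apply: le_trans (nrm_le_sum_coord nrmP _) _; apply: ler_sum => j _.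
rewrite ler_wpM2r ?nrm_ge0 // !mxE ler_norml.
by have := x0 j; have := y0 j; move=> /andP[? ?] /andP[? ?]; apply/andP; split; lra.
Qed.

Lemma theta_ge0 : 0 <= theta nrm delta.
Proof.
rewrite mulr_ge0 ?invr_ge0 ?ler0n //.
exact: sup_upper_bound has_sup_cube_dist _ cube_dist0.
Qed.

(* The rounding error z = v - roundoff v lies in the half-open cube, and so
   does -t z for 0 <= t < 1; hence (1 + t) nrm z <= 2 theta for all such t. *)
Lemma nrm_roundoff_le_theta v : nrm (v - roundoff delta v) <= theta nrm delta.
Proof.
set z := v - roundoff delta v.
have z_cube j : - (2^-1 * delta) <= z 0 j < 2^-1 * delta.
  rewrite /z /roundoff !mxE; have := floor_itv (v 0 j / delta + 2^-1).
  set f := Num.floor _; rewrite intrD => /andP[f_le f_gt].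
  have := ler_wpM2l (ltW delta_gt0) f_le; rewrite -(ltr_pM2l delta_gt0) in f_gt.
  rewrite !mulrDr mulrCA divff ?gt_eqF // mulr1 in f_gt *; lra.
have stretch t : 0 <= t < 1 -> (1 + t) * nrm z <= 2 * theta nrm delta.
  move=> /andP[t0 t1]; rewrite /theta mulrA divff ?mul1r ?pnatr_eq0 //.
  apply: sup_upper_bound has_sup_cube_dist _ _.
  exists z, (- (t *: z)); split; first exact/cube0P.
    apply/cube0P => j; have /andP[? ?] := z_cube j.
    have -> : (- (t *: z)) 0 j = - (t * z 0 j) by rewrite !mxE.
    by apply/andP; split; nra.
  have -> : z - - (t *: z) = (1 + t) *: z by rewrite opprK scalerDl scale1r.
  by rewrite (nrmZ nrmP) ger0_norm //; lra.
have [le_z|lt_z] := lerP (nrm z) (theta nrm delta) => //.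
have z_gt0 : 0 < nrm z by apply: le_lt_trans lt_z; apply: theta_ge0.
have := stretch (theta nrm delta / nrm z).
rewrite divr_ge0 ?theta_ge0 ?nrm_ge0 // ltr_pdivrMr // mul1r lt_z.
by rewrite mulrDl divfK ?gt_eqF // mul1r => /(_ isT); lra.
Qed.

Lemma discretization_ball_finite (o : 'rV[R]_n) rho : exists s : seq 'rV[R]_n,
  forall y, discretization delta y -> nrm (o - y) < rho -> y \in s.
Proof.
have [c c_gt0 c_le] := mx_norm_le_nrm nrmP.
have [s sM] := int_box_finite n (Num.truncn ((rho + nrm o) / c / delta)).
exists [seq delta *: ivec R m | m <- s] => _ [m ->] ym; apply: map_f; apply: sM => j.
have mj : `|(m 0 j)%:~R : R| * delta <= (rho + nrm o) / c.
  have -> : `|(m 0 j)%:~R : R| * delta = `|(delta *: ivec R m) 0 j|.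
    by rewrite !mxE normrM (gtr0_norm delta_gt0) mulrC.
  apply: le_trans (coord_le_mx_norm _ _ _) _; rewrite ler_pdivlMr // mulrC.
  apply: le_trans (c_le _) _; have := nrm_distD nrmP (delta *: ivec R m) o 0.
  by rewrite !subr0 (nrm_distC nrmP _ o); lra.
have B_ge0 : 0 <= (rho + nrm o) / c / delta.
  rewrite divr_ge0 ?(ltW delta_gt0) //; apply: le_trans mj.
  by rewrite mulr_ge0 // ltW.
rewrite -abszE lez_nat truncn_ge_nat // natr_absz intr_norm.
by rewrite ler_pdivlMr.
Qed.

End Discretization.

Lemma le_radius (R : realFieldType) (lmax rmax th r : R) :
  0 <= lmax < 1 -> 0 <= rmax -> 0 <= th ->
  (1 - lmax) * r = (1 + lmax) * rmax + th -> th <= r.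
Proof.
move=> /andP[lmax_ge0 lmax_lt1] rmax_ge0 th_ge0 r_eq.
rewrite -(@ler_pM2l _ (1 - lmax)) ?subr_gt0 // r_eq.
apply: (@le_trans _ _ th); first by rewrite ler_piMl // gerBl.
by rewrite lerDr mulr_ge0 // addr_ge0.
Qed.

Lemma drift_lt (R : realFieldType) (lmax rmax th r lam rho d d' : R) :
  0 <= lmax < 1 -> 0 <= rmax -> 0 <= th ->
  (1 - lmax) * r = (1 + lmax) * rmax + th -> 0 <= lam <= lmax ->
  r < rho -> d <= rho -> d' <= rmax + lam * (rmax + d) + th -> d' < rho.
Proof.
move=> lmaxP rmax_ge0 th_ge0 r_eq /andP[lam_ge0 lam_le] r_rho d_rho.
have r_ge0 : 0 <= r by apply: le_trans th_ge0 (le_radius lmaxP rmax_ge0 th_ge0 r_eq).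
have gap : 0 <= lmax - lam by rewrite subr_ge0.
have := ler_wpM2l lam_ge0 d_rho.
have := mulr_ge0 gap r_ge0; have := mulr_ge0 gap rmax_ge0.
have : 0 < (1 - lam) * (rho - r).
  by case/andP: lmaxP => _ lmax_lt1; rewrite mulr_gt0 ?subr_gt0 // (le_lt_trans lam_le).
lra.
Qed.

Section RoundedContractions.
Variables (R : realType) (n : nat) (delta : R) (nrm : 'rV[R]_n -> R) (N : nat).
Variables (w : 'I_N -> 'rV[R]_n -> 'rV[R]_n) (lam : 'I_N -> R) (xf : 'I_N -> 'rV[R]_n).
Variable o : 'rV[R]_n.
Hypotheses (delta_gt0 : 0 < delta) (nrmP : is_norm nrm).
Hypotheses (lamP : forall i, 0 <= lam i < 1)
  (contr : forall i x y, nrm (w i x - w i y) <= lam i * nrm (x - y))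
  (fixed : forall i, w i (xf i) = xf i).

Local Notation wt := (fun i => roundoff_map delta (w i)).
Local Notation rmax := (\big[Order.max/0]_(i < N) nrm (xf i - o)).
Local Notation lmax := (\big[Order.max/0]_(i < N) lam i).
Local Notation r := ((1 + lmax) / (1 - lmax) * rmax + theta nrm delta / (1 - lmax)).

Let th_ge0 : 0 <= theta nrm delta := theta_ge0 nrmP delta_gt0.
Let rmax_ge0 : 0 <= rmax := bigmax_ge_id _ _ _ _.

Let lmaxP : 0 <= lmax < 1.
Proof. by rewrite bigmax_ge_id; apply: bigmax_lt => // i _; case/andP: (lamP i). Qed.

Let r_eq : (1 - lmax) * r = (1 + lmax) * rmax + theta nrm delta.
Proof. by field; case/andP: lmaxP => _ lmax_lt1; rewrite subr_eq0 gt_eqF. Qed.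

Lemma roundoff_step_lt i y (rho : R) :
  r < rho -> nrm (o - y) <= rho -> nrm (o - wt i y) < rho.
Proof.
move=> r_rho y_rho; have /andP[lam0 _] := lamP i.
have lam_le : 0 <= lam i <= lmax by rewrite lam0 le_bigmax.
apply: drift_lt lmaxP rmax_ge0 th_ge0 r_eq lam_le r_rho y_rho _.
have xf_o : nrm (xf i - o) <= rmax by apply: le_bigmax.
have o_wt := nrm_distD nrmP o (xf i) (wt i y).
have xf_wt := nrm_distD nrmP (xf i) (w i y) (wt i y).
have w_wt : nrm (w i y - wt i y) <= theta nrm delta by apply: nrm_roundoff_le_theta.
have xf_w := contr i (xf i) y; rewrite fixed in xf_w.
have := ler_wpM2l lam0 (nrm_distD nrmP (xf i) o y).
have := ler_wpM2l lam0 (lerD xf_o (lexx (nrm (o - y)))).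
by rewrite (nrm_distC nrmP o (xf i)) in o_wt; lra.
Qed.

Lemma roundoff_ball_invariant i y (rho : R) :
  r < rho -> nrm (o - y) < rho -> nrm (o - wt i y) < rho.
Proof. by move=> r_rho /ltW; apply: roundoff_step_lt. Qed.

Lemma recurrent_dist_le (p : 'I_N -> 'rV[R]_n -> R) x :
  recurrent wt p x -> nrm (o - x) <= r.
Proof.
rewrite leNgt => x_rec; apply/negP => r_x.
apply: (not_recurrent (Z := [set y | nrm (o - y) < nrm (o - x)])) x_rec.
- by move=> i y; apply: roundoff_ball_invariant.
- by rewrite /= ltxx.
- by move=> i; apply: roundoff_step_lt.
Qed.

Lemma exists_recurrent (p : 'I_N -> 'rV[R]_n -> R) :
  (forall i x, discretization delta x -> 0 < p i x <= 1) ->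
  (forall x, discretization delta x -> \sum_(i < N) p i x = 1) ->
  exists x, discretization delta x /\ recurrent wt p x.
Proof.
move=> p_pos p_sum1.
pose P y := discretization delta y /\ nrm (o - y) < r + 1.
have wt_disc i y : discretization delta (wt i y) by eexists.
have wtP i y : P y -> P (wt i y).
  by case=> _ y_r; split; [exact: wt_disc | apply: roundoff_ball_invariant; rewrite ?ltrDl].
have [s sP] := discretization_ball_finite nrmP delta_gt0 o (r + 1).
have P_o : P (roundoff delta o).
  split; first by eexists.
  apply: le_lt_trans (nrm_roundoff_le_theta nrmP delta_gt0 o) _.
  by apply: le_lt_trans (le_radius lmaxP rmax_ge0 th_ge0 r_eq) _; rewrite ltrDl.
have [x o_x x_class] := reachable_closed_class wtP (fun y Py => sP y Py.1 Py.2) P_o.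
have [x_disc _] := reachable_closed wtP o_x P_o.
exists x; split=> //.
apply: (@recurrent_of_closed_class _ _ _ wt p x (discretization delta) _ _ _ s x_disc).
- by move=> i y _; apply: wt_disc.
- by move=> i y /(p_pos i)/andP[].
- exact: p_sum1.
- move=> u x_u; have [u_disc u_r] := reachable_closed wtP (reachable_trans o_x x_u) P_o.
  exact: sP.
- exact: x_class.
Qed.

End RoundedContractions.

Theorem theorem13 (R : realType) (n : nat) (delta : R) (nrm : 'rV[R]_n -> R)
  (N : nat) (w : 'I_N -> 'rV[R]_n -> 'rV[R]_n) (lam : 'I_N -> R)
  (xf : 'I_N -> 'rV[R]_n) (p : 'I_N -> 'rV[R]_n -> R) (o : 'rV[R]_n) :
  0 < delta ->
  is_norm nrm ->
  (forall i, 0 <= lam i < 1) ->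
  (forall i x y, nrm (w i x - w i y) <= lam i * nrm (x - y)) ->
  (forall i, w i (xf i) = xf i) ->
  (forall i x, discretization delta x -> 0 < p i x <= 1) ->
  (forall x, discretization delta x -> \sum_(i < N) p i x = 1) ->
  let wt := fun i => roundoff_map delta (w i) in
  let rmax := \big[Order.max/0]_(i < N) nrm (xf i - o) in
  let lmax := \big[Order.max/0]_(i < N) lam i in
  let alpha := (1 + lmax) / (1 - lmax) in
  let r := alpha * rmax + theta nrm delta / (1 - lmax) in
  let A := [set x | discretization delta x /\ recurrent wt p x] in
  (forall eps : R, 0 < eps ->
     let S := [set x | discretization delta x /\ nrm (o - x) < r + eps] in
     (forall i x, S x -> S (wt i x)) /\ A `<=` S)
  /\ A !=set0.
Proof.
move=> delta_gt0 nrmP lamP contr fixed p_pos p_sum1 wt rmax lmax alpha r A.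
split=> [eps eps_gt0 S|]; last first.
  exact (exists_recurrent o delta_gt0 nrmP lamP contr fixed p_pos p_sum1).
have r_eps : r < r + eps by rewrite ltrDl.
split=> [i y [_ y_S]|x [x_disc x_rec]].
  by split; [eexists | apply: (roundoff_ball_invariant delta_gt0 nrmP lamP contr fixed)].
split=> //; apply: le_lt_trans r_eps.
exact (recurrent_dist_le o delta_gt0 nrmP lamP contr fixed x_rec).
Qed.
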